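(* Fix one of the following settings: (i) real polynomials in one variable $x$, with ''distinguished set'' the point $x=1$; (ii) real polynomials in two variables $x,y$, with distinguished set the line $x+y=1$; (iii) real polynomials in three variables $x,y,z$, with distinguished set the plane $x+y+z=1$. Call a polynomial good if it equals $1$ on the distinguished set, has only non-negative coefficients, and has zero constant term. Let $f$ be a good polynomial and $a$ a positive integer. Then there are good polynomials $g$ and $h$ with $N(g)=aN(f)$ and $N(h)=aN(f)-(a-1)$. Moreover, if $f$ is invariant under a finite group $\Gamma$ of diagonal unitary matrices acting on the variables (e.g. $x\mapsto \eta x$; $(x,y)\mapsto(\eta x,\eta y)$; $(x,y)\mapsto(\eta x,\eta^2y)$; $(x,y,z)\mapsto(\eta x,\eta^2 y,\eta^4z)$ for a root of unity $\eta$), then $g$ and $h$ may be chosen $\Gamma$-invariant.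
   Context: $N(f)$ denotes the number of distinct monomials with nonzero coefficient in $f$. A polynomial $f$ is $\Gamma$-invariant if $f(\gamma\mathbf{x})=f(\mathbf{x})$ for all $\gamma\in\Gamma$. *)

From HB Require Import structures.
From mathcomp Require Import all_boot all_order all_algebra.
From mathcomp Require Import mpoly.
From mathcomp Require Import complex.
Set Implicit Arguments. Unset Strict Implicit. Unset Printing Implicit Defensive.
Import Order.TTheory GRing.Theory Num.Theory.
Local Open Scope ring_scope.

Definition Nmon (R : nzRingType) (n : nat) (f : {mpoly R[n]}) : nat :=
  size (msupp f).

Definition good (R : rcfType) (n : nat) (f : {mpoly R[n]}) : Prop :=
  [/\ forall x : 'I_n -> R, \sum_(i < n) x i = 1 -> f.@[x] = 1,
      forall m : 'X_{1..n}, 0 <= f@_m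
    & f@_0%MM = 0].

Definition adjmx (R : rcfType) (n : nat) (A : 'M[complex R]_n) : 'M[complex R]_n :=
  (map_mx (@conjc R) A)^T.

Definition diag_unitary_group (R : rcfType) (n : nat)
    (Gam : seq 'M[complex R]_n) : Prop :=
  [/\ (1%:M : 'M[complex R]_n) \in Gam,
      forall A B, A \in Gam -> B \in Gam -> A *m B \in Gam,
      forall A, A \in Gam -> exists2 B, B \in Gam & A *m B = 1%:M,
      forall A, A \in Gam -> is_diag_mx A
    & forall A, A \in Gam -> A *m adjmx A = 1%:M].

Definition gamma_invariant (R : rcfType) (n : nat) (Gam : seq 'M[complex R]_n)
    (f : {mpoly R[n]}) : Prop :=
  forall gam, gam \in Gam -> forall x : 'cV[complex R]_n,
    (map_mpoly (real_complex R) f).@[fun i => (gam *m x) i ord0]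
    = (map_mpoly (real_complex R) f).@[fun i => x i ord0].

From HB Require Import structures.
From mathcomp Require Import all_boot all_order all_algebra.
From mathcomp Require Import mpoly.
From mathcomp Require Import complex.
From mathcomp Require Import zify.
Import Order.TTheory GRing.Theory Num.Theory.
Local Open Scope ring_scope.
Set Implicit Arguments. Unset Strict Implicit.

(* Let x^m0 be a monomial of maximal degree of f and w = lam x^m0 with
   0 < lam <= f_m0.  The polynomials P_0 = f, P_(k+1) = (f - w) + w P_k are
   again good: on the hyperplane P_(k+1) = 1 - w + w = 1.  Since P_k has no
   constant term, every monomial of w P_k has degree larger than deg m0, so
   f - w and w P_k have disjoint supports and N(P_(k+1)) = N(f - w) + N(P_k).
   With lam < f_m0 we have N(f - w) = N(f), with lam = f_m0 it is N(f) - 1;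
   k = a - 1 gives g and h.
   A diagonal gamma multiplies each monomial by a scalar, and monomials are
   linearly independent as functions (substitute x_i = t^(K^i) for K large),
   so every monomial of a Gamma-invariant f, in particular x^m0, is
   Gamma-invariant, and then so is every P_k. *)

Lemma base_digits_inj (K n : nat) (a b : 'I_n -> nat) :
  (forall i, a i < K)%N -> (forall i, b i < K)%N ->
  (\sum_(i < n) a i * K ^ i = \sum_(i < n) b i * K ^ i)%N -> a =1 b.
Proof.
elim: n a b => [|n IHn] a b a_lt b_lt; first by move=> _ [].
have K_gt0 : (0 < K)%N by apply: leq_ltn_trans (a_lt ord0).
have shift c : (\sum_(i < n.+1) c i * K ^ i
               = c ord0 + K * \sum_(i < n) c (lift ord0 i) * K ^ i)%N.
  rewrite big_ord_recl expn0 muln1 big_distrr; congr (_ + _).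
  by apply: eq_bigr => i _; rewrite lift0 expnS mulnCA.
rewrite !shift => eq_ab.
have eq0 : a ord0 = b ord0.
  move: (congr1 (modn^~ K) eq_ab).
  by rewrite !(mulnC K) !(addnC (_ ord0)) !modnMDl !modn_small.
move: eq_ab; rewrite eq0 => /addnI /eqP.
rewrite eqn_mul2l eqn0Ngt K_gt0 /= => /eqP eq_tail.
move=> i; have [j ->|->] := unliftP ord0 i; last exact: eq0.
exact: (IHn _ _ (fun i => a_lt _) (fun i => b_lt _) eq_tail).
Qed.

Lemma horner_eq0_poly (C : numDomainType) (p : {poly C}) :
  (forall t, p.[t] = 0) -> p = 0.
Proof.
move=> p0; apply: (@roots_geq_poly_eq0 _ p [seq i%:R | i <- iota 0 (size p)]).
- by apply/allP => x _; rewrite /root p0.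
- by rewrite map_inj_uniq ?iota_uniq // => i j /eqP; rewrite eqr_nat => /eqP.
- by rewrite size_map size_iota.
Qed.

Lemma monomial_functions_free (C : numDomainType) (n : nat)
    (s : seq 'X_{1..n}) (c : 'X_{1..n} -> C) :
  uniq s ->
  (forall v : 'I_n -> C, \sum_(m <- s) c m * \prod_i v i ^+ m i = 0) ->
  forall m, m \in s -> c m = 0.
Proof.
move=> s_uniq s0 m0 m0s.
pose K := (\sum_(m <- s) mdeg m).+1.
pose code (m : 'X_{1..n}) := (\sum_(i < n) m i * K ^ i)%N.
have lt_K m : m \in s -> forall i, (m i < K)%N.
  move=> ms i; rewrite ltnS (big_rem m) //= (leq_trans _ (leq_addr _ _)) //.
  by rewrite mdegE (bigD1 i) //= leq_addr.
pose p : {poly C} := \sum_(m <- s) c m *: 'X^(code m).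
have p0 : p = 0.
  apply: horner_eq0_poly => t; rewrite -(s0 (fun i => t ^+ (K ^ i))) horner_sum.
  apply: eq_bigr => m _; rewrite hornerZ hornerXn /code expr_sum; congr (_ * _).
  by apply: eq_bigr => i _; rewrite -exprM mulnC.
have := congr1 (fun q : {poly C} => q`_(code m0)) p0.
rewrite coef_sumMXn coef0 big_mkcond (bigD1_seq m0) //= eqxx big1_seq ?addr0 //.
move=> m /andP [m_neq ms]; case: eqP => // /base_digits_inj eq_m.
by case/eqP: m_neq; apply/mnmP => i; apply: eq_m; apply: lt_K.
Qed.

Lemma msupp_scale_invariant (C : numDomainType) (n : nat) (F : {mpoly C[n]})
    (d : 'I_n -> C) :
  (forall v, F.@[fun i => d i * v i] = F.@[v]) ->
  forall m, m \in msupp F -> \prod_i d i ^+ m i = 1.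
Proof.
move=> F_inv m mF; apply/eqP; rewrite -subr_eq0.
have : F@_m * (\prod_i d i ^+ m i - 1) = 0.
  apply: (monomial_functions_free (c := fun m => F@_m * (\prod_i d i ^+ m i - 1)))
    (msupp_uniq F) _ m mF => v.
  rewrite -[RHS](subrr F.@[v]) -{1}F_inv !mevalE -sumrB.
  apply: eq_bigr => m' _; rewrite -mulrA mulrBl mul1r -big_split /= mulrBr.
  by congr (_ * _ - _); apply: eq_bigr => i _; rewrite exprMn.
by move/eqP; rewrite mulf_eq0 mcoeff_eq0 mF.
Qed.

Lemma mulmx_diag_col (R : pzRingType) (n : nat) (g : 'M[R]_n) (x : 'cV[R]_n) i :
  is_diag_mx g -> (g *m x) i ord0 = g i i * x i ord0.
Proof.
move/is_diag_mxP => g_diag; rewrite mxE (bigD1 i) //= big1 ?addr0 // => j ji.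
by rewrite g_diag ?mul0r // eq_sym.
Qed.

Section GammaInvariant.
Variables (R : rcfType) (n : nat) (Gam : seq 'M[complex R]_n).

Lemma gamma_invariantD p q : gamma_invariant Gam p -> gamma_invariant Gam q ->
  gamma_invariant Gam (p + q).
Proof.
move=> p_inv q_inv g gG x; rewrite !rmorphD.
by congr (_ + _); [exact: p_inv | exact: q_inv].
Qed.

Lemma gamma_invariantB p q : gamma_invariant Gam p -> gamma_invariant Gam q ->
  gamma_invariant Gam (p - q).
Proof.
move=> p_inv q_inv g gG x; rewrite !rmorphB.
by congr (_ - _); [exact: p_inv | exact: q_inv].
Qed.

Lemma gamma_invariantM p q : gamma_invariant Gam p -> gamma_invariant Gam q ->
  gamma_invariant Gam (p * q).
Proof.
move=> p_inv q_inv g gG x; rewrite !rmorphM.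
by congr (_ * _); [exact: p_inv | exact: q_inv].
Qed.

Lemma gamma_invariantZ c p :
  gamma_invariant Gam p -> gamma_invariant Gam (c *: p).
Proof. by move=> p_inv g gG x; rewrite !map_mpolyZ !mevalZ p_inv. Qed.

Hypothesis Gam_diag : forall g, g \in Gam -> is_diag_mx g.

Lemma gamma_invariantX_msupp f m :
  gamma_invariant Gam f -> m \in msupp f -> gamma_invariant Gam 'X_[m].
Proof.
move=> f_inv mf g gG x; rewrite map_mpolyX !mevalX.
have g_m : \prod_i g i i ^+ m i = 1.
  apply: (msupp_scale_invariant (F := map_mpoly (real_complex R) f)); last first.
    by rewrite (perm_mem (msupp_map_mpoly _ (fmorph_inj _))).
  move=> v; have := f_inv g gG (\col_i v i).
  by congr (_ = _); apply: meval_eq => i; rewrite ?mulmx_diag_col ?Gam_diag // mxE.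
under eq_bigr => i _ do rewrite mulmx_diag_col ?Gam_diag // exprMn.
by rewrite big_split /= g_m mul1r.
Qed.

End GammaInvariant.

Lemma Nmon_subZX (R : nzRingType) (n : nat) (f : {mpoly R[n]}) m c :
  m \in msupp f -> c != f@_m -> Nmon (f - c *: 'X_[m]) = Nmon f.
Proof.
move=> mf c_neq; apply/perm_size/uniq_perm; rewrite ?msupp_uniq // => m'.
rewrite !mcoeff_msupp mcoeffB mcoeffZ mcoeffX.
have [<-|_] := eqVneq m m'; last by rewrite mulr0 subr0.
by rewrite mulr1 subr_eq0 eq_sym c_neq -mcoeff_msupp.
Qed.

Lemma Nmon_sub_mcoeffX (R : nzRingType) (n : nat) (f : {mpoly R[n]}) m :
  m \in msupp f -> Nmon (f - f@_m *: 'X_[m]) = (Nmon f).-1.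
Proof.
move=> mf; rewrite /Nmon -(size_rem mf); apply: perm_size.
apply: uniq_perm; [exact: msupp_uniq | exact/rem_uniq/msupp_uniq | move=> m'].
rewrite (mem_rem_uniq _ (msupp_uniq f)) inE !mcoeff_msupp mcoeffB mcoeffZ mcoeffX.
by have [<-|_] := eqVneq m m'; rewrite ?mulr1 ?subrr ?eqxx // mulr0 subr0.
Qed.

Lemma Nmon_disjointD (R : nzRingType) (n : nat) (p q : {mpoly R[n]}) :
  [predI msupp p & msupp q] =1 xpred0 -> Nmon (p + q) = (Nmon p + Nmon q)%N.
Proof.
by move=> pq_disj; rewrite /Nmon (perm_size (msuppD pq_disj)) size_cat.
Qed.

Lemma mcoeffM_ge0 (R : numDomainType) (n : nat) (p q : {mpoly R[n]}) :
  (forall m, 0 <= p@_m) -> (forall m, 0 <= q@_m) -> forall m, 0 <= (p * q)@_m.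
Proof.
by move=> p_ge0 q_ge0 m; rewrite mcoeffM sumr_ge0 // => i _; rewrite mulr_ge0.
Qed.

Fixpoint graft (R : nzRingType) (n : nat) (f w : {mpoly R[n]}) (k : nat) :
    {mpoly R[n]} :=
  if k is k'.+1 then f - w + w * graft f w k' else f.

Lemma graftS (R : nzRingType) (n : nat) (f w : {mpoly R[n]}) k :
  graft f w k.+1 = f - w + w * graft f w k.
Proof. by []. Qed.

Lemma gamma_invariant_graft (R : rcfType) (n : nat) (Gam : seq 'M[complex R]_n)
    (f w : {mpoly R[n]}) k :
  gamma_invariant Gam f -> gamma_invariant Gam w ->
  gamma_invariant Gam (graft f w k).
Proof.
move=> f_inv w_inv; elim: k => [|k IHk]; first exact: f_inv.
rewrite graftS; apply: gamma_invariantD.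
  exact: gamma_invariantB.
exact: gamma_invariantM.
Qed.

Section Graft.
Variables (R : rcfType) (n : nat) (f : {mpoly R[n]}) (m0 : 'X_{1..n}) (lam : R).
Hypotheses (f_good : good f) (m0f : m0 \in msupp f)
  (m0_max : forall m, m \in msupp f -> (mdeg m <= mdeg m0)%N)
  (lam_gt0 : 0 < lam) (lam_le : lam <= f@_m0).

Let w := lam *: 'X_[m0].

Let m0_neq0 : m0 != 0%MM.
Proof.
case: f_good => _ _ f0; apply: contraTneq m0f => ->.
by rewrite mcoeff_msupp f0 eqxx.
Qed.

Let msupp_wM p : perm_eq (msupp (w * p)) [seq (m0 + m)%MM | m <- msupp p].
Proof.
rewrite /w -scalerAl -commr_mpolyX.
exact: perm_trans (msuppZ _ (lt0r_neq0 lam_gt0)) (msuppMX _ _).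
Qed.

Let Nmon_wM p : Nmon (w * p) = Nmon p.
Proof. by rewrite /Nmon (perm_size (msupp_wM p)) size_map. Qed.

Lemma good_graft k : good (graft f w k).
Proof.
case: f_good => f1 f_ge0 f0.
elim: k => [|k [IH1 IH_ge0 IH0]] //; rewrite graftS; split.
- by move=> x sx; rewrite mevalD mevalB mevalM IH1 // f1 // mulr1 subrK.
- have w_ge0 m : 0 <= w@_m by rewrite mcoeffZ mcoeffX mulr_ge0 ?ler0n ?ltW.
  move=> m; rewrite mcoeffD addr_ge0 ?mcoeffM_ge0 // mcoeffB.
  rewrite /w mcoeffZ mcoeffX; have [<-|_] := eqVneq m0 m.
    by rewrite mulr1 subr_ge0.
  by rewrite mulr0 subr0.
- rewrite mcoeffD mcoeffB (mcoeff0_is_multiplicative _ _).1 IH0 mulr0 addr0 f0.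
  by rewrite /w mcoeffZ mcoeffX (negbTE m0_neq0) mulr0 subr0.
Qed.

Lemma Nmon_graft k : Nmon (graft f w k) = (Nmon f + k * Nmon (f - w))%N.
Proof.
elim: k => [|k IHk]; first by rewrite addn0.
have [_ _ graft0] := good_graft k.
rewrite graftS Nmon_disjointD; first by rewrite Nmon_wM IHk mulSn addnCA.
move=> m /=; apply/negbTE/andP => -[m_low].
rewrite (perm_mem (msupp_wM _)) => /mapP [m' m'_supp m_eq].
rewrite m_eq in m_low.
have m'_pos : (0 < mdeg m')%N.
  rewrite lt0n mdeg_eq0; apply: contraTneq m'_supp => ->.
  by rewrite mcoeff_msupp graft0 eqxx.
have : (mdeg (m0 + m') <= mdeg m0)%N.
  move/msuppB_le: m_low; rewrite mem_cat /w msuppMCX ?lt0r_neq0 // mem_seq1.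
  by case/orP => [/m0_max //|/eqP ->].
rewrite mdegD; lia.
Qed.

End Graft.

Lemma good_neq0 (R : rcfType) (n : nat) (f : {mpoly R[n]}) :
  (0 < n)%N -> good f -> f != 0.
Proof.
move=> n_gt0 [f1 _ _]; pose i0 := Ordinal n_gt0.
have sum1 : \sum_(i < n) ((i == i0)%:R : R) = 1.
  by rewrite (bigD1 i0) //= big1 ?addr0 // => i /negbTE ->.
apply/eqP => f0; have := f1 _ sum1.
by rewrite f0 meval0 => /eqP; rewrite eq_sym oner_eq0.
Qed.

Unset Implicit Arguments.

Theorem proposition2p2 (R : rcfType) (n : nat) (f : {mpoly R[n]}) (a : nat) :
  (1 <= n <= 3)%N -> good f -> (0 < a)%N ->
  (exists g h : {mpoly R[n]},
      [/\ good g, good h, Nmon g = (a * Nmon f)%N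
        & Nmon h = (a * Nmon f - (a - 1))%N]) /\
  (forall Gam : seq 'M[complex R]_n,
      diag_unitary_group Gam -> gamma_invariant Gam f ->
      exists g h : {mpoly R[n]},
        [/\ good g, good h, Nmon g = (a * Nmon f)%N
          & Nmon h = (a * Nmon f - (a - 1))%N]
        /\ gamma_invariant Gam g /\ gamma_invariant Gam h).
Proof.
move=> /andP [n_gt0 _] f_good a_gt0.
pose m0 := mlead f; pose c := f@_m0.
have m0f : m0 \in msupp f by apply/mlead_supp/good_neq0.
have m0_max m : m \in msupp f -> (mdeg m <= mdeg m0)%N.
  by move=> mf; apply/lemc_mdeg/msupp_le_mlead.
have c_gt0 : 0 < c.
  by case: f_good => _ f_ge0 _; rewrite lt_def -mcoeff_msupp m0f f_ge0.
have Nf_gt0 : (0 < Nmon f)%N by rewrite /Nmon; case: (msupp f) m0f.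
have half_gt0 : 0 < c / 2 by rewrite divr_gt0.
have half_lt : c / 2 < c by rewrite ltr_pdivrMr // ltr_pMr // ltr1n.
pose g := graft f (c / 2 *: 'X_[m0]) (a - 1).
pose h := graft f (c *: 'X_[m0]) (a - 1).
have gh_good : [/\ good g, good h, Nmon g = (a * Nmon f)%N
                 & Nmon h = (a * Nmon f - (a - 1))%N].
  split; first exact: good_graft (ltW half_lt) _.
  - exact: good_graft (lexx c) _.
  - by rewrite Nmon_graft ?(ltW half_lt) ?Nmon_subZX ?lt_eqF //; nia.
  - by rewrite Nmon_graft ?Nmon_sub_mcoeffX //; nia.
split; first by exists g, h.
move=> Gam [_ _ _ Gam_diag _] f_inv.
have m0_inv := gamma_invariantX_msupp Gam_diag f_inv m0f.
exists g, h; split; first exact: gh_good.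
by split; apply: gamma_invariant_graft f_inv (gamma_invariantZ _ m0_inv).
Qed.
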